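(* Let $H$ be a poly-$\mathbb{Z}$ group, $A$ an $n\times n$ matrix over $\mathbb{Z}H$, and $f_A:\mathbb{Z}H^n\to\mathbb{Z}H^n$ the homomorphism of free $\mathbb{Z}H$-modules given by left multiplication by $A$ on columns. If the induced map $(\mathbb{Z}H/\Delta(H))^n\cong\mathbb{Z}^n\to\mathbb{Z}^n$, which is left multiplication by $\varepsilon(A)$, is injective, then $f_A$ is injective.
   Context: A group is poly-$\mathbb{Z}$ if it has a subnormal series all of whose factors are infinite cyclic. $\varepsilon:\mathbb{Z}H\to\mathbb{Z}$, $\sum n_ih_i\mapsto\sum n_i$, is the augmentation map, $\Delta(H)$ its kernel, and $\varepsilon(A)$ denotes the integer matrix obtained by applying $\varepsilon$ to each entry of $A$. *)

(* Abstract (possibly infinite) groups are given by explicit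
   operations on an eqType carrier; the integral group ring ZH is modelled by
   formal finite Z-linear combinations of group elements. *)
From HB Require Import structures.
From mathcomp Require Import all_boot all_order all_algebra.
Set Implicit Arguments. Unset Strict Implicit. Unset Printing Implicit Defensive.
Import Order.TTheory GRing.Theory Num.Theory.
Local Open Scope ring_scope.

Section Group.
Variables (T : eqType) (mul : T -> T -> T) (inv : T -> T) (one : T).

Definition is_group : Prop :=
  [/\ forall x y z, mul x (mul y z) = mul (mul x y) z,
      forall x, mul one x = x,
      forall x, mul x one = x,
      forall x, mul (inv x) x = one
    & forall x, mul x (inv x) = one].

Definition zpow (g : T) (m : int) : T :=
  match m with
  | Posz k => iter k (mul g) one
  | Negz k => iter k.+1 (mul (inv g)) one
  end.

Definition is_subgroup (G : T -> Prop) : Prop :=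
  [/\ G one, forall x y, G x -> G y -> G (mul x y) & forall x, G x -> G (inv x)].

Definition normal_in (N G : T -> Prop) : Prop :=
  [/\ is_subgroup N, forall x, N x -> G x &
      forall x y, N x -> G y -> N (mul (mul (inv y) x) y)].

Definition inf_cyclic_quotient (G N : T -> Prop) : Prop :=
  exists2 g, G g &
    (forall x, G x -> exists m : int, N (mul x (zpow g (- m)))) /\
    (forall m : int, N (zpow g m) -> m = 0).

Definition polyZ : Prop :=
  exists (k : nat) (G : nat -> T -> Prop),
    [/\ forall x, G 0%N x,
        forall x, G k x <-> x = one,
        forall i, (i < k)%N -> is_subgroup (G i),
        forall i, (i < k)%N -> normal_in (G i.+1) (G i)
      & forall i, (i < k)%N -> inf_cyclic_quotient (G i) (G i.+1)].

(* Elements of the integral group ring ZH as formal sums  sum_p p.1 * p.2 *)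
Definition ZH := seq (int * T).

Definition zh_coeff (s : ZH) (h : T) : int := \sum_(p <- s | p.2 == h) p.1.

Definition zh_eq0 (s : ZH) : Prop := forall h, zh_coeff s h = 0.

Definition zh_add (s t : ZH) : ZH := s ++ t.

Definition zh_mul (s t : ZH) : ZH :=
  [seq (p.1 * q.1, mul p.2 q.2) | p <- s, q <- t].

Definition zh_aug (s : ZH) : int := \sum_(p <- s) p.1.

Definition zh_mxv (n : nat) (A : 'I_n -> 'I_n -> ZH) (v : 'I_n -> ZH)
  (i : 'I_n) : ZH :=
  foldr zh_add [::] [seq zh_mul (A i j) (v j) | j <- enum 'I_n].

Definition aug_mx (n : nat) (A : 'I_n -> 'I_n -> ZH) : 'M[int]_n :=
  \matrix_(i, j) zh_aug (A i j).

End Group.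

(* Induct down the subnormal series.  If N <| G with G/N = <gN> infinite
   cyclic, every element of ZG splits into components of degree d in Z, and
   multiplying a component by a power of g moves it into ZN.  A relation
   A v = 0 over ZG with all degrees in [-M, M] thus becomes a rectangular
   system over ZN whose augmentation matrix is the block Toeplitz matrix of the
   Laurent polynomial matrix P(t) = sum_d eps(A_d) t^d.  Since P(1) = eps(A)
   is injective, so is P(t) on vectors of polynomials: a solution vanishes at
   t = 1, hence is divisible by t - 1, and its size drops. *)
From HB Require Import structures.
From mathcomp Require Import all_boot all_order all_algebra.
From mathcomp Require Import zify.
From Stdlib Require Import ClassicalEpsilon.
Import GRing.Theory Num.Theory.
Set Implicit Arguments. Unset Strict Implicit. Unset Printing Implicit Defensive.
Local Open Scope ring_scope.

Section GroupLaws.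
Variables (T : eqType) (mul : T -> T -> T) (inv : T -> T) (one : T).
Hypothesis grpT : is_group mul inv one.
Local Notation zp := (zpow mul inv one).

Lemma gmulA x y z : mul x (mul y z) = mul (mul x y) z.
Proof. by case: grpT. Qed.
Lemma gmul1g x : mul one x = x.
Proof. by case: grpT. Qed.
Lemma gmulg1 x : mul x one = x.
Proof. by case: grpT. Qed.
Lemma gmulVg x : mul (inv x) x = one.
Proof. by case: grpT. Qed.
Lemma gmulgV x : mul x (inv x) = one.
Proof. by case: grpT. Qed.

Lemma gmulKg x y : mul (inv x) (mul x y) = y.
Proof. by rewrite gmulA gmulVg gmul1g. Qed.
Lemma gmulKVg x y : mul x (mul (inv x) y) = y.
Proof. by rewrite gmulA gmulgV gmul1g. Qed.
Lemma gmulgI x y z : mul x y = mul x z -> y = z.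
Proof. by move=> e; rewrite -(gmulKg x y) e gmulKg. Qed.
Lemma ginv_uniq x y : mul x y = one -> inv x = y.
Proof. by move=> e; rewrite -(gmulg1 (inv x)) -e gmulKg. Qed.
Lemma ginvM x y : inv (mul x y) = mul (inv y) (inv x).
Proof. by apply: ginv_uniq; rewrite -gmulA (gmulA y) gmulgV gmul1g gmulgV. Qed.

Lemma zpowS g m : zp g (m + 1) = mul g (zp g m).
Proof.
case: m => [k|[|k]]; first by rewrite (_ : Posz k + 1 = Posz k.+1) //; lia.
  by rewrite (_ : Negz 0 + 1 = 0) //= gmulg1 gmulgV.
rewrite (_ : Negz k.+1 + 1 = Negz k); last by rewrite !NegzE; lia.
by rewrite /zpow (iterS k.+1) gmulKVg.
Qed.

Lemma zpowB1 g m : zp g (m - 1) = mul (inv g) (zp g m).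
Proof. by rewrite -{2}(subrK 1 m) zpowS gmulKg. Qed.

Lemma zpowD g m n : zp g (m + n) = mul (zp g m) (zp g n).
Proof.
elim/int_rect: m => [|k IH|k IH]; first by rewrite add0r gmul1g.
  by rewrite (_ : k.+1%:Z + n = (k%:Z + n) + 1) ?zpowS ?IH ?gmulA //; lia.
rewrite (_ : - k.+1%:Z + n = (- k%:Z + n) - 1); last by lia.
by rewrite zpowB1 IH gmulA -zpowB1 (_ : - k%:Z - 1 = - k.+1%:Z) //; lia.
Qed.

Lemma zpowN g m : inv (zp g m) = zp g (- m).
Proof. by apply: ginv_uniq; rewrite -zpowD subrr. Qed.

Lemma zpow_mem (P : T -> Prop) g m :
  is_subgroup mul inv one P -> P g -> P (zp g m).
Proof.
case=> P1 PM PV Pg; elim/int_rect: m => [|k IH|k IH] //.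
  by rewrite (_ : k.+1%:Z = k%:Z + 1) ?zpowS; [apply: PM | lia].
by rewrite (_ : - k.+1%:Z = - k%:Z - 1) ?zpowB1; [apply: PM; [apply: PV|] | lia].
Qed.

End GroupLaws.

Lemma polymx_inj_of_eval1 (I J : finType) (P : I -> J -> {poly int}) :
  (forall x : J -> int,
     (forall i, \sum_j (P i j).[1] * x j = 0) -> forall j, x j = 0) ->
  forall X : J -> {poly int}, (forall i, \sum_j P i j * X j = 0) -> forall j, X j = 0.
Proof.
move=> inj1 X; have [N] := ubnP (\sum_j size (X j)).
elim: N X => // N IH X sizeX PX0.
have root1 j : root (X j) 1.
  apply/eqP; apply: (inj1 (fun j => (X j).[1])) => i.
  have := congr1 (horner^~ 1) (PX0 i); rewrite /= horner_sum horner0 => e.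
  by rewrite -[RHS]e; apply: eq_bigr => j' _; rewrite hornerM.
have [Y defX] : exists Y : J -> {poly int}, forall j, X j = Y j * ('X - 1%:P).
  apply: (@fin_all_exists _ (fun=> {poly int}) (fun j Y => X j = Y * ('X - 1%:P))).
  by move=> j; apply/factor_theorem.
have X1_neq0 : 'X - 1%:P != 0 :> {poly int} by rewrite -size_poly_eq0 size_XsubC.
have sizeY j : Y j != 0 -> size (X j) = (size (Y j)).+1.
  by move=> nzY; rewrite defX size_Mmonic ?monicXsubC // size_XsubC addn2.
have [X0 | /forallPn[j0 nzX0]] := boolP [forall j, X j == 0].
  by move=> j; apply/eqP/(forallP X0).
have nzY0 : Y j0 != 0 by apply: contraNneq nzX0; rewrite defX => ->; rewrite mul0r.
suff Y0 : forall j, Y j = 0 by move=> j; rewrite defX Y0 mul0r.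
apply: IH => [|i].
  move: sizeX; rewrite ltnS; apply: leq_trans.
  rewrite (bigD1 j0) //= [X in (_ <= X)%N](bigD1 j0) //=.
  rewrite (sizeY _ nzY0) addSn ltnS leq_add // leq_sum // => j _.
  by case: (eqVneq (Y j) 0) => [->|/sizeY ->]; rewrite ?size_poly0.
apply: (mulIf X1_neq0); rewrite mul0r big_distrl /= -[RHS](PX0 i).
by apply: eq_bigr => j _; rewrite defX mulrA.
Qed.

(* The block Toeplitz system below is multiplication by the polynomial matrix
   [\sum_a e i j (a - M) 'X^a] on vectors of polynomials of degree <= 2M; the
   product has degree < 2(2M+1), so no equation is lost. *)
Lemma toeplitz_inj (I J : finType) (e : I -> J -> int -> int) (M : nat) :
  (forall i j a, (a < - M%:Z) || (M%:Z < a) -> e i j a = 0) ->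
  (forall x : J -> int,
     (forall i, \sum_j (\sum_(a < M.*2.+1) e i j (a%:Z - M%:Z)) * x j = 0) ->
     forall j, x j = 0) ->
  forall x : J * 'I_(M.*2.+1) -> int,
  (forall i (r : 'I_((M.*2.+1).*2)),
     \sum_(js : J * 'I_(M.*2.+1)) e i js.1 (r%:Z - js.2%:Z - M%:Z) * x js = 0) ->
  forall js, x js = 0.
Proof.
move=> e_supp inj1 x x_sol.
pose P i j := \poly_(a < M.*2.+1) e i j (a%:Z - M%:Z).
pose X j := \poly_(s < M.*2.+1) x (j, inord s).
have coefP i j (a : nat) : (P i j)`_a = e i j (a%:Z - M%:Z).
  rewrite coef_poly; case: ltnP => // a_big.
  by rewrite e_supp //; apply/orP; right; lia.
have coefX j (s : 'I_(M.*2.+1)) : (X j)`_s = x (j, s).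
  by rewrite coef_poly ltn_ord inord_val.
have coefX_big j (u : nat) : (M.*2.+1 <= u)%N -> (X j)`_u = 0.
  by move=> u_big; rewrite coef_poly ltnNge u_big.
have coefPX i j k : (P i j * X j)`_k =
    \sum_(s < M.*2.+1) e i j (k%:Z - s%:Z - M%:Z) * x (j, s).
  rewrite coefMr (big_ord_widen _ (fun u => (P i j)`_(k - u) * (X j)`_u)
                   (leq_addr (M.*2.+1) k.+1)).
  rewrite (eq_bigr (fun s : 'I_(M.*2.+1) => e i j (k%:Z - s%:Z - M%:Z) * (X j)`_s));
    last by move=> s _; rewrite coefX.
  rewrite (big_ord_widen _ (fun u => e i j (k%:Z - u%:Z - M%:Z) * (X j)`_u)
            (leq_addl k.+1 (M.*2.+1))).
  rewrite big_mkcond [RHS]big_mkcond; apply: eq_bigr => u _.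
  case: (ltnP u k.+1) => uk; case: (ltnP u M.*2.+1) => uM //=.
  - by rewrite coefP; congr (e _ _ _ * _); lia.
  - by rewrite coefX_big // mulr0.
  - by rewrite e_supp ?mul0r //; apply/orP; left; lia.
suff X0 : forall j, X j = 0 by move=> [j s]; rewrite -coefX X0 coef0.
apply: (@polymx_inj_of_eval1 I J P) => [y y_sol {}j | i].
  apply: (inj1 y) => i; rewrite -[RHS](y_sol i); apply: eq_bigr => j' _.
  by rewrite horner_poly; congr (_ * _); apply: eq_bigr => a _; rewrite expr1n mulr1.
apply/polyP => k; rewrite coef0 coef_sum (eq_bigr _ (fun j _ => coefPX i j k)).
case: (ltnP k (M.*2.+1).*2) => k_small.
  by rewrite -[RHS](x_sol i (Ordinal k_small)) pair_big; apply: eq_bigr => -[].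
rewrite big1 // => j _; rewrite big1 // => s _.
by rewrite e_supp ?mul0r //; apply/orP; right; have := ltn_ord s; lia.
Qed.

Lemma fin_seq_bounded (K : finType) (X : eqType) (s : K -> seq X) (f : X -> nat) :
  exists M, forall k x, x \in s k -> (f x <= M)%N.
Proof.
have le_sum (Y : eqType) (r : seq Y) F y : y \in r -> (F y <= \sum_(z <- r) F z)%N.
  by move=> yr; rewrite (big_rem y) //= leq_addr.
exists (\sum_k \sum_(x <- s k) f x)%N => k x xs.
exact: leq_trans (le_sum _ _ _ _ xs) (le_sum _ _ _ _ (mem_index_enum k)).
Qed.

Lemma sum_pair (I J : finType) (F : I * J -> int) :
  \sum_ij F ij = \sum_i \sum_j F (i, j).
Proof. by rewrite pair_bigA; apply: eq_bigr => -[]. Qed.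

Section GroupRing.
Variables (T : eqType) (mul : T -> T -> T).

Definition zh_mulmxv (I J : finType) (A : I -> J -> ZH T) (v : J -> ZH T)
  (i : I) : ZH T :=
  foldr (@zh_add T) [::] [seq zh_mul mul (A i j) (v j) | j <- enum J].

Definition zh_select (P : pred (int * T)) (f : int * T -> T) (s : ZH T) : ZH T :=
  [seq (p.1, f p) | p <- [seq p <- s | P p]].

Lemma zh_coeff_mulmxv (I J : finType) (A : I -> J -> ZH T) v i h :
  zh_coeff (zh_mulmxv A v i) h = \sum_j zh_coeff (zh_mul mul (A i j) (v j)) h.
Proof.
rewrite /zh_mulmxv -big_enum /=.
elim: (enum J) => [|j r IH] /=; first by rewrite big_nil /zh_coeff big_nil.
by rewrite /zh_add {1}/zh_coeff big_cat -!/(zh_coeff _ h) IH big_cons.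
Qed.

Lemma zh_coeff_mul (s t : ZH T) h : zh_coeff (zh_mul mul s t) h =
  \sum_(p <- s) \sum_(q <- t) (if mul p.2 q.2 == h then p.1 * q.1 else 0).
Proof. by rewrite /zh_coeff /zh_mul big_mkcond big_allpairs_dep. Qed.

Lemma zh_coeff_select (s : ZH T) P f h :
  zh_coeff (zh_select P f s) h = \sum_(p <- s) (if P p && (f p == h) then p.1 else 0).
Proof.
rewrite /zh_coeff big_map big_filter_cond /= big_mkcond.
by apply: eq_bigr => p _; rewrite andbC.
Qed.

Lemma zh_aug_select (s : ZH T) P f :
  zh_aug (zh_select P f s) = \sum_(p <- s | P p) p.1.
Proof. by rewrite /zh_aug big_map big_filter. Qed.

Lemma zh_coeff_mul_select (s t : ZH T) P Q f f' h :
  zh_coeff (zh_mul mul (zh_select P f s) (zh_select Q f' t)) h =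
  \sum_(p <- s) \sum_(q <- t)
     (if [&& P p, Q q & mul (f p) (f' q) == h] then p.1 * q.1 else 0).
Proof.
rewrite zh_coeff_mul big_map big_filter big_mkcond; apply: eq_bigr => p _.
case: (P p) => /=; last by rewrite big1.
rewrite big_map big_filter big_mkcond; apply: eq_bigr => q _.
by case: (Q q).
Qed.

(* Rectangular systems are needed: slicing a system over a group by degrees
   along an infinite cyclic quotient makes it rectangular. *)
Definition aug_reflects_inj (P : T -> Prop) :=
  forall (I J : finType) (A : I -> J -> ZH T) (v : J -> ZH T),
  (forall i j p, p \in A i j -> P p.2) -> (forall j p, p \in v j -> P p.2) ->
  (forall x : J -> int,
     (forall i, \sum_j zh_aug (A i j) * x j = 0) -> forall j, x j = 0) ->
  (forall i, zh_eq0 (zh_mulmxv A v i)) -> forall j, zh_eq0 (v j).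

Lemma aug_reflects_injS (P Q : T -> Prop) :
  (forall x, Q x -> P x) -> aug_reflects_inj P -> aug_reflects_inj Q.
Proof.
move=> QP injP I J A v AQ vQ; apply: injP => [i j p pA | j p pv]; apply: QP.
  exact: AQ pA.
exact: vQ pv.
Qed.

End GroupRing.

Lemma aug_reflects_inj1 (T : eqType) (mul : T -> T -> T) (inv : T -> T) one :
  is_group mul inv one -> aug_reflects_inj mul (eq^~ one).
Proof.
move=> grpT I J A v A1 v1 inj_aug Av0 j h.
have [->|h_neq1] := eqVneq h one; last first.
  rewrite /zh_coeff big1_seq // => p /andP [/eqP ph pv].
  by move: h_neq1; rewrite -ph (v1 _ _ pv) eqxx.
have coeff1 (s : ZH T) : (forall p, p \in s -> p.2 = one) -> zh_coeff s one = zh_aug s.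
  move=> s1; rewrite /zh_coeff /zh_aug big_mkcond; apply: eq_big_seq => p ps.
  by rewrite s1 // eqxx.
rewrite coeff1; last exact: v1.
apply: (inj_aug (fun j => zh_aug (v j))) => i.
rewrite -[RHS](Av0 i one) zh_coeff_mulmxv; apply: eq_bigr => j' _.
rewrite zh_coeff_mul /zh_aug big_distrlr /=; apply: eq_big_seq => p pA.
apply: eq_big_seq => q qv.
by rewrite (A1 _ _ _ pA) (v1 _ _ qv) (gmulg1 grpT) eqxx.
Qed.

Section Degree.
Variables (T : eqType) (mul : T -> T -> T) (inv : T -> T) (one : T).
Hypothesis grpT : is_group mul inv one.
Variables (G N : T -> Prop) (g : T).
Local Notation zp m := (zpow mul inv one g m).
Hypotheses (subG : is_subgroup mul inv one G) (nNG : normal_in mul inv one N G).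
Hypotheses (Gg : G g) (quoG : forall x, G x -> exists m : int, N (mul x (zp (- m))))
  (quo_free : forall m : int, N (zp m) -> m = 0).

Lemma memN1 : N one. Proof. by case: nNG => -[]. Qed.
Lemma memNM x y : N x -> N y -> N (mul x y).
Proof. by case: nNG => -[_ NM _] _ _; apply: NM. Qed.
Lemma memNV x : N x -> N (inv x).
Proof. by case: nNG => -[_ _ NV] _ _; apply: NV. Qed.
Lemma memNJ x y : N x -> G y -> N (mul (mul (inv y) x) y).
Proof. by case: nNG => _ _ NJ; apply: NJ. Qed.
Lemma memN_G x : N x -> G x. Proof. by case: nNG => _ NG _; apply: NG. Qed.
Lemma memGM x y : G x -> G y -> G (mul x y).
Proof. by case: subG => _ GM _; apply: GM. Qed.
Lemma memG_zp m : G (zp m). Proof. exact: zpow_mem. Qed.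
Lemma memG_zpM m x : G x -> G (mul (zp m) x). Proof. exact/memGM/memG_zp. Qed.

(* The isomorphism G/N = <gN> ~ Z; on elements outside G its value is junk. *)
Definition deg (x : T) : int :=
  epsilon (inhabits 0) (fun m : int => N (mul x (zp (- m)))).

Lemma degP x : G x -> N (mul x (zp (- deg x))).
Proof.
by move=> Gx; apply: (epsilon_spec _ (fun m => N (mul x (zp (- m))))); apply: quoG.
Qed.

Lemma deg_uniq x m : G x -> N (mul x (zp (- m))) -> deg x = m.
Proof.
move=> Gx Nm; have := memNM (memNV (degP Gx)) Nm.
rewrite (ginvM grpT) (zpowN grpT) opprK -(gmulA grpT) (gmulKg grpT) -(zpowD grpT).
by move/quo_free/eqP; rewrite subr_eq0 => /eqP.
Qed.

Lemma degM x y : G x -> G y -> deg (mul x y) = deg x + deg y.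
Proof.
move=> Gx Gy; apply: deg_uniq; first exact: memGM.
have := memNM (degP Gx) (memNJ (degP Gy) (memG_zp (- deg x))).
rewrite (zpowN grpT) opprK; congr N.
rewrite -!(gmulA grpT) (gmulA grpT (zp _) (zp _)) -(zpowD grpT) addNr (gmul1g grpT).
by rewrite -(zpowD grpT) opprD addrC.
Qed.

Lemma deg_zp m : deg (zp m) = m.
Proof.
by apply: deg_uniq; [apply: memG_zp | rewrite -(zpowD grpT) subrr; apply: memN1].
Qed.

Lemma deg_eq0 x : G x -> (deg x = 0) <-> N x.
Proof.
move=> Gx; split => [deg0 | Nx]; last first.
  by apply: deg_uniq; rewrite // oppr0 (gmulg1 grpT).
by have := degP Gx; rewrite deg0 oppr0 (gmulg1 grpT).
Qed.

Lemma deg_zpM m x : G x -> deg (mul (zp m) x) = m + deg x.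
Proof. by move=> Gx; rewrite degM ?deg_zp //; apply: memG_zp. Qed.

Lemma deg_Mzp m x : G x -> deg (mul x (zp m)) = deg x + m.
Proof. by move=> Gx; rewrite degM ?deg_zp //; apply: memG_zp. Qed.

Section Slicing.
Variables (I J : finType) (A : I -> J -> ZH T) (v : J -> ZH T) (M : nat).
Hypotheses (AG : forall i j p, p \in A i j -> G p.2)
  (vG : forall j q, q \in v j -> G q.2).
Hypotheses (A_bnd : forall i j p, p \in A i j -> (`|deg p.2| <= M)%N)
  (v_bnd : forall j q, q \in v j -> (`|deg q.2| <= M)%N).

Local Notation col := 'I_(M.*2.+1).
Local Notation row := 'I_((M.*2.+1).*2).

Definition col_deg (s : col) : int := s%:Z - M%:Z.
Definition row_deg (r : row) : int := r%:Z - (M.*2)%:Z.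

Lemma col_deg_onto d : (`|d| <= M)%N -> exists s : col, col_deg s = d.
Proof.
move=> dM; have s_lt : (absz (d + M%:Z)%R < M.*2.+1)%N by lia.
by exists (Ordinal s_lt); rewrite /col_deg /=; lia.
Qed.

Lemma col_deg_inj : injective col_deg.
Proof. by move=> s s' e; apply: ord_inj; move: e; rewrite /col_deg; lia. Qed.

(* Entry ((i, r), (j, s)) is the part of A i j of degree row_deg r - col_deg s
   and (j, s) is the part of v j of degree col_deg s, both translated into N
   by powers of g; so row (i, r) of the product is the part of A v of degree
   row_deg r, translated into N. *)
Definition slice_mx (ir : I * row) (js : J * col) : ZH T :=
  zh_select (fun p => deg p.2 == row_deg ir.2 - col_deg js.2)
    (fun p => mul (mul (zp (- row_deg ir.2)) p.2) (zp (col_deg js.2)))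
    (A ir.1 js.1).

Definition slice_vec (js : J * col) : ZH T :=
  zh_select (fun q => deg q.2 == col_deg js.2)
    (fun q => mul (zp (- col_deg js.2)) q.2) (v js.1).

Lemma slice_mx_supp ir js p : p \in slice_mx ir js -> N p.2.
Proof.
case/mapP => q; rewrite mem_filter => /andP [/eqP dq /AG Gq] -> /=.
apply/(deg_eq0 (memGM (memG_zpM _ Gq) (memG_zp _))).
by rewrite deg_Mzp ?deg_zpM ?dq //; [lia | apply: memG_zpM].
Qed.

Lemma slice_vec_supp js q : q \in slice_vec js -> N q.2.
Proof.
case/mapP => p; rewrite mem_filter => /andP [/eqP dp /vG Gp] -> /=.
by apply/(deg_eq0 (memG_zpM _ Gp)); rewrite deg_zpM ?dp //; lia.
Qed.

Lemma aug_slice_inj :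
  (forall x : J -> int,
     (forall i, \sum_j zh_aug (A i j) * x j = 0) -> forall j, x j = 0) ->
  forall x : J * col -> int,
  (forall ir, \sum_js zh_aug (slice_mx ir js) * x js = 0) -> forall js, x js = 0.
Proof.
move=> inj_aug x x_sol.
pose e i j a := \sum_(p <- A i j | deg p.2 == a) p.1.
have sum_e i j : \sum_(a < M.*2.+1) e i j (col_deg a) = zh_aug (A i j).
  rewrite /zh_aug (exchange_big_dep xpredT) //=; apply: eq_big_seq => p pA.
  have [a0 a0_deg] := col_deg_onto (A_bnd pA).
  rewrite (bigD1 a0) ?a0_deg //= big1 ?addr0 // => a /andP [/eqP da na].
  by case/eqP: na; apply: col_deg_inj; rewrite a0_deg.
apply: (@toeplitz_inj I J e M) => [i j a a_out | y y_sol | i r].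
- rewrite /e big1_seq // => p /andP [/eqP dp pA].
  by have := A_bnd pA; rewrite dp; case/orP: a_out; lia.
- apply: inj_aug => i; rewrite -[RHS](y_sol i).
  by apply: eq_bigr => j _; rewrite -sum_e.
rewrite -[RHS](x_sol (i, r)); apply: eq_bigr => -[j s] _ /=.
rewrite zh_aug_select; congr (e _ _ _ * _); rewrite /row_deg /col_deg /=; lia.
Qed.

Lemma coeff_slice_mulmxv i r h :
  zh_coeff (zh_mulmxv mul slice_mx slice_vec (i, r)) h =
  \sum_j \sum_(p <- A i j) \sum_(q <- v j)
    (if (deg p.2 + deg q.2 == row_deg r) &&
        (mul (zp (- row_deg r)) (mul p.2 q.2) == h)
     then p.1 * q.1 else 0).
Proof.
rewrite zh_coeff_mulmxv sum_pair; apply: eq_bigr => j _ /=.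
under eq_bigr => s _ do rewrite /slice_mx /slice_vec zh_coeff_mul_select /=.
rewrite [LHS]exchange_big /=; apply: eq_big_seq => p pA.
rewrite [LHS]exchange_big /=; apply: eq_big_seq => q qv.
have [s0 s0_deg] := col_deg_onto (v_bnd qv).
rewrite (bigD1 s0) //= big1 ?addr0 => [|s ns]; last first.
  case: ifP => // /and3P [_ /eqP ds _].
  by case/eqP: ns; apply: col_deg_inj; rewrite s0_deg.
rewrite s0_deg eqxx -!(gmulA grpT) (gmulA grpT (zp _) (zp _)) -(zpowD grpT).
rewrite addrN (gmul1g grpT); congr (if _ then _ else _); congr (_ && _).
by apply/eqP/eqP => [-> | <-]; rewrite ?subrK ?addrK.
Qed.

Lemma slice_mulmxv_eq0 :
  (forall i, zh_eq0 (zh_mulmxv mul A v i)) ->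
  forall ir, zh_eq0 (zh_mulmxv mul slice_mx slice_vec ir).
Proof.
move=> Av0 [i r] h; rewrite coeff_slice_mulmxv.
have [Nh | notNh] := classic (N h).
  rewrite -[RHS](Av0 i (mul (zp (row_deg r)) h)) zh_coeff_mulmxv.
  apply: eq_bigr => j _; rewrite zh_coeff_mul.
  apply: eq_big_seq => p pA; apply: eq_big_seq => q qv.
  have Gp := AG pA; have Gq := vG qv.
  congr (if _ then _ else _); apply/andP/eqP => [[_ /eqP <-] | pq_h].
    by rewrite -(zpowN grpT) (gmulKVg grpT).
  split; last by rewrite pq_h -(zpowN grpT) (gmulKg grpT).
  have deg_h : deg h = 0 by apply/(deg_eq0 (memN_G Nh)).
  by rewrite -degM // pq_h deg_zpM ?deg_h ?addr0 //; apply: memN_G.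
rewrite big1 // => j _; rewrite big1_seq // => p pA; rewrite big1_seq // => q qv.
have Gp := AG pA; have Gq := vG qv.
case: ifP => // /andP [/eqP dpq /eqP h_def]; case: notNh; rewrite -h_def.
apply/(deg_eq0 (memG_zpM _ (memGM Gp Gq))).
by rewrite deg_zpM ?degM ?dpq ?addNr //; apply: memGM.
Qed.

Lemma coeff_slice_vec j s h : col_deg s = deg h ->
  zh_coeff (slice_vec (j, s)) (mul (zp (- col_deg s)) h) = zh_coeff (v j) h.
Proof.
move=> s_deg; rewrite zh_coeff_select /zh_coeff [RHS]big_mkcond /=.
apply: eq_bigr => q _; have [->|q_neq] := eqVneq q.2 h; first by rewrite s_deg !eqxx.
suff -> : (mul (zp (- col_deg s)) q.2 == mul (zp (- col_deg s)) h) = false.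
  by rewrite andbF.
by apply/negbTE; apply: contra_neq q_neq => /(gmulgI grpT).
Qed.

Lemma slice_vec_eq0 : (forall js, zh_eq0 (slice_vec js)) -> forall j, zh_eq0 (v j).
Proof.
move=> w0 j h.
have [/hasP [q qv /eqP q_h] | /hasPn no_h] := boolP (has (fun q => q.2 == h) (v j)).
  have [s s_deg] := col_deg_onto (v_bnd qv).
  by rewrite -(@coeff_slice_vec j s) ?w0 // s_deg q_h.
by rewrite /zh_coeff big1_seq // => q /andP [q_h /no_h]; rewrite q_h.
Qed.

End Slicing.

Lemma aug_reflects_inj_ext : aug_reflects_inj mul N -> aug_reflects_inj mul G.
Proof.
move=> injN I J A v AG vG inj_aug Av0.
have [MA A_bnd] :=
  fin_seq_bounded (fun ij : I * J => A ij.1 ij.2) (fun p => `|deg p.2|%N).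
have [Mv v_bnd] := fin_seq_bounded v (fun q => `|deg q.2|%N).
have A_bndM i j p : p \in A i j -> (`|deg p.2| <= maxn MA Mv)%N.
  by move=> pA; rewrite leq_max (A_bnd (i, j) p pA).
have v_bndM j q : q \in v j -> (`|deg q.2| <= maxn MA Mv)%N.
  by move=> qv; rewrite leq_max (v_bnd j q qv) orbT.
apply: (slice_vec_eq0 v_bndM); apply: injN.
- exact: slice_mx_supp AG.
- exact: slice_vec_supp vG.
- exact: aug_slice_inj A_bndM inj_aug.
- exact: slice_mulmxv_eq0 AG vG v_bndM Av0.
Qed.

End Degree.

Lemma aug_reflects_inj_polyZ (T : eqType) (mul : T -> T -> T) inv one :
  is_group mul inv one -> polyZ mul inv one -> aug_reflects_inj mul (fun=> True).
Proof.
move=> grpT [k [G [G0 Gk subG nG quoG]]].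
suff injG d : (d <= k)%N -> aug_reflects_inj mul (G (k - d)%N).
  by apply: aug_reflects_injS (injG k (leqnn k)) => x _; rewrite subnn; apply: G0.
elim: d => [_ | d IH lt_dk].
  by rewrite subn0; apply: aug_reflects_injS (aug_reflects_inj1 grpT) => x /Gk.
have lt_k : (k - d.+1 < k)%N by lia.
have [g Gg [quo quo_free]] := quoG _ lt_k.
apply: (aug_reflects_inj_ext grpT (subG _ lt_k) (nG _ lt_k) Gg quo quo_free).
rewrite -(_ : (k - d)%N = (k - d.+1).+1); last by lia.
exact: IH (ltnW lt_dk).
Qed.

Unset Implicit Arguments.
Set Strict Implicit.

Theorem mainTheorem14 (T : eqType) (mul : T -> T -> T) (inv : T -> T)
    (one : T) (n : nat) (A : 'I_n -> 'I_n -> ZH T) :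
  is_group mul inv one ->
  polyZ mul inv one ->
  (forall x : 'cV[int]_n, aug_mx A *m x = 0 -> x = 0) ->
  forall v : 'I_n -> ZH T,
    (forall i, zh_eq0 (zh_mxv mul A v i)) -> forall i, zh_eq0 (v i).
Proof.
move=> grpT polyZT aug_inj v Av0.
apply: (@aug_reflects_inj_polyZ _ _ _ _ grpT polyZT _ _ A v) => // x x_sol j.
have /matrixP/(_ j 0) : \col_j x j = 0.
  apply: aug_inj; apply/matrixP => i k; rewrite !mxE -[RHS](x_sol i).
  by apply: eq_bigr => j' _; rewrite !mxE.
by rewrite !mxE.
Qed.
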